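(* Let $q,n,h,t$ be positive integers with $h\le n$, and suppose $t+1$ divides $q$. For $j\in\{0,1,\dots,t\}$ let $$\mathcal C_q^{(j)}(n;t)=\Big\{\mathbf x\in[q]^n:\ \sum_{i=1}^n x_i\equiv j\pmod{t+1}\Big\}.$$ Then for every $j\in\{0,1,\dots,t\}$, $\mathcal C_q^{(j)}(n;t)$ is an optimal $(\cdot,h,t)$-AED code in $[q]^n$ (i.e., it is $(\cdot,h,t)$-AED and has the largest cardinality among all $(\cdot,h,t)$-AED codes in $[q]^n$), and $|\mathcal C_q^{(j)}(n;t)|=\frac{q^n}{t+1}$.
   Context: $[q]=\{0,1,\dots,q-1\}$. Channel over $[q]$ with $(\cdot,h,t)$-asymmetric errors: an input $\mathbf x\in[q]^n$ can produce any output $\mathbf y\in[q]^n$ satisfying $y_i\ge x_i$ for all $i$, $\sum_{i=1}^n\mathbb 1_{\{y_i\ne x_i\}}\le h$, and $\sum_{i=1}^n(y_i-x_i)\le t$ (no separate bound on the amplitude $y_i-x_i$). $\mathrm{Out}(\mathbf x)$ denotes the set of all such outputs. A code $\mathcal C\subseteq[q]^n$ is $(\cdot,h,t)$-AED if for all $\mathbf x\in\mathcal C$ and $\mathbf y\in\mathrm{Out}(\mathbf x)$ with $\mathbf y\ne\mathbf x$, we have $\mathbf y\notin\mathcal C$. *)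

From mathcomp Require Import all_boot.
Set Implicit Arguments. Unset Strict Implicit. Unset Printing Implicit Defensive.

Definition word (q n : nat) := {ffun 'I_n -> 'I_q}.

Definition is_out (q n h t : nat) (x y : word q n) : bool :=
  [forall i, x i <= y i] &&
  (#|[set i | y i != x i]| <= h) &&
  (\sum_(i < n) (y i - x i) <= t).

Definition is_AED (q n h t : nat) (C : {set word q n}) : Prop :=
  forall x y : word q n, x \in C -> is_out h t x y -> y != x -> y \notin C.

Definition Cqj (q n t j : nat) : {set word q n} :=
  [set x : word q n | \sum_(i < n) (x i : nat) == j %[mod t.+1]].

(* Fix a coordinate i0 and cut [q] into the q/(t+1) blocks of t+1 consecutive
   values.  Moving x_{i0} inside its block to the unique value that makes the
   coordinate sum congruent to j maps any word into C_q^{(j)}.  On an AED code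
   this map is injective: two codewords with the same image agree off i0 and
   have x_{i0}, y_{i0} in one block, so the larger is an output of the smaller
   (one changed position, increase at most t).  Hence every AED code is at most
   as large as each C_q^{(j)}; these classes being AED themselves, they all have
   the same size, and they partition [q]^n into t+1 parts. *)

From mathcomp Require Import all_boot zify.

Set Implicit Arguments.
Unset Strict Implicit.
Unset Printing Implicit Defensive.

Lemma sum_out_split q n (x y : word q n) : (forall i, x i <= y i) ->
  \sum_i (y i : nat) = \sum_i (x i : nat) + \sum_i (y i - x i).
Proof. by move=> hle; rewrite -big_split; apply: eq_bigr => i _ /=; rewrite subnKC. Qed.

Lemma sum_out_gt0 q n (x y : word q n) : (forall i, x i <= y i) -> y != x ->
  0 < \sum_i (y i - x i).
Proof.
move=> hle; apply: contraNT; rewrite -leqNgt leqn0 sum_nat_eq0 => /forallP h0.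
apply/eqP/ffunP => i; apply/val_inj/eqP; rewrite eqn_leq hle andbT.
by rewrite -subn_eq0; apply: (implyP (h0 i)).
Qed.

Lemma Cqj_AED q n h t j : is_AED h t (Cqj q n t j).
Proof.
move=> x y; rewrite !inE => /eqP hx /andP[/andP[/forallP hle _] hsum] hne.
rewrite (sum_out_split hle) -hx -{2}[\sum_i _]addn0 eqn_modDl mod0n.
by rewrite modn_small ?ltnS // -lt0n sum_out_gt0.
Qed.

Lemma is_out_same_block q n h t i0 (x y : word q n) : 0 < h ->
  (forall i, i != i0 -> x i = y i) -> x i0 <= y i0 ->
  (x i0 : nat) %/ t.+1 = (y i0 : nat) %/ t.+1 -> is_out h t x y.
Proof.
move=> hh hoff hle hblock; apply/andP; split; first (apply/andP; split).
- by apply/forallP => i; case: (eqVneq i i0) => [->|/hoff ->].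
- apply: leq_trans hh; rewrite -(cards1 i0) subset_leq_card //.
  by apply/subsetP => i; rewrite !inE; apply: contraR => /hoff ->.
- rewrite (bigD1 i0) //= big1 => [|i /hoff ->]; last by rewrite subnn.
  have := divn_eq (x i0) t.+1; have := divn_eq (y i0) t.+1.
  have : (y i0 : nat) %% t.+1 < t.+1 by rewrite ltn_mod.
  rewrite -hblock; lia.
Qed.

Lemma block_addn_lt d q x r : d %| q -> x < q -> r < d -> x %/ d * d + r < q.
Proof.
move=> /dvdnP[k ->] hx hr.
have : x %/ d < k by rewrite ltn_divLR // (leq_trans _ hr).
nia.
Qed.

Section Recoding.

Variables (q n t j : nat) (i0 : 'I_n).
Hypothesis hdiv : t.+1 %| q.

Definition block_base (x : word q n) : nat := (x i0 : nat) %/ t.+1 * t.+1.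

(* Since t = -1 modulo t+1, this residue is j minus the sum of the other
   coordinates and of the block base. *)
Definition block_offset (x : word q n) : nat :=
  (j + t * (\sum_(i | i != i0) (x i : nat) + block_base x)) %% t.+1.

Lemma block_offset_lt x : block_offset x < t.+1.
Proof. exact: ltn_mod. Qed.

Lemma recode_value_lt x : block_base x + block_offset x < q.
Proof. by rewrite block_addn_lt ?block_offset_lt. Qed.

Definition recode (x : word q n) : word q n :=
  [ffun i => if i == i0 then Ordinal (recode_value_lt x) else x i].

Lemma recode_at x : (recode x i0 : nat) = block_base x + block_offset x.
Proof. by rewrite ffunE eqxx. Qed.

Lemma recode_off x i : i != i0 -> recode x i = x i.
Proof. by rewrite ffunE => /negbTE ->. Qed.

Lemma recode_block x : (recode x i0 : nat) %/ t.+1 = (x i0 : nat) %/ t.+1.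
Proof.
by rewrite recode_at /block_base divnMDl // (divn_small (block_offset_lt x)) addn0.
Qed.

Lemma recode_in_Cqj x : recode x \in Cqj q n t j.
Proof.
rewrite inE (bigD1 i0) //= recode_at.
rewrite (eq_bigr (fun i => x i : nat)) => [|i /recode_off -> //].
rewrite /block_offset; set s := \sum_(i | _) _; set b := block_base x.
rewrite addnAC modnDmr.
have -> : b + s + (j + t * (s + b)) = (s + b) * t.+1 + j by lia.
by rewrite modnMDl.
Qed.

Lemma recode_inj_AED h (C : {set word q n}) : 0 < h -> is_AED h t C ->
  {in C &, injective recode}.
Proof.
move=> hh hC x y hx hy hxy.
have hoff i : i != i0 -> x i = y i.
  by move=> hi; rewrite -(recode_off x hi) -(recode_off y hi) hxy.
have hblock : (x i0 : nat) %/ t.+1 = (y i0 : nat) %/ t.+1.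
  by rewrite -recode_block hxy recode_block.
clear hxy; apply/eqP; apply: contraT => hne.
without loss hle : x y hx hy hoff hblock hne / x i0 <= y i0.
  move=> wlog; case: (leqP (x i0) (y i0)) => [|/ltnW]; first exact: wlog.
  by apply: wlog; rewrite 1?eq_sym // => i /hoff.
have hout := is_out_same_block hh hoff hle hblock.
by rewrite eq_sym in hne; rewrite (negbTE (hC x y hx hout hne)) in hy.
Qed.

End Recoding.

Lemma card_AED_le q n h t j (C : {set word q n}) : 0 < n -> 0 < h ->
  t.+1 %| q -> is_AED h t C -> #|C| <= #|Cqj q n t j|.
Proof.
move=> hn hh hdiv hC.
have recode_inj := recode_inj_AED (j := j) (i0 := Ordinal hn) (hdiv := hdiv) hh hC.
rewrite -(card_in_imset recode_inj) subset_leq_card //.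
by apply/subsetP => _ /imsetP[x _ ->]; apply: recode_in_Cqj.
Qed.

Lemma sum_card_Cqj q n t : \sum_(k < t.+1) #|Cqj q n t k| = q ^ n.
Proof.
have hres (x : word q n) : (\sum_i (x i : nat)) %% t.+1 < t.+1 by rewrite ltn_mod.
have -> : q ^ n = #|word q n| by rewrite card_ffun !card_ord.
rewrite -sum1_card (partition_big (fun x => Ordinal (hres x)) xpredT) //=.
apply: eq_bigr => k _; rewrite -sum1_card; apply: eq_bigl => x.
by rewrite inE (modn_small (ltn_ord k)) -val_eqE.
Qed.

Theorem theorem4 (q n h t : nat) (hq : 0 < q) (hn : 0 < n) (hh : 0 < h)
    (ht : 0 < t) (hhn : h <= n) (hdiv : t.+1 %| q) :
  forall j : nat, j <= t ->
    [/\ is_AED h t (Cqj q n t j),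
        (forall C : {set word q n}, is_AED h t C -> #|C| <= #|Cqj q n t j|)
      & #|Cqj q n t j| * t.+1 = q ^ n].
Proof.
move=> j _; split; first exact: Cqj_AED.
  by move=> C; apply: card_AED_le.
have card_eq k : #|Cqj q n t k| = #|Cqj q n t j|.
  by apply/eqP; rewrite eqn_leq !(card_AED_le _ hn hh hdiv) //; apply: Cqj_AED.
rewrite -(sum_card_Cqj q n t); under eq_bigr do rewrite card_eq.
by rewrite sum_nat_const card_ord mulnC.
Qed.
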